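(* Let $A\in\mathbb R^{m\times n}$, $b\in\mathbb R^m$, $c\in\mathbb R^n$ with $b>\mathbf 0$ and $c>\mathbf 0$, and let $(P)$: $\max c^\intercal x$ s.t. $Ax\le b$, $x\ge\mathbf 0$, with dual $(D)$: $\min b^\intercal y$ s.t. $A^\intercal y\ge c$, $y\ge\mathbf 0$. Consider the zero-sum game with the skew-symmetric $(m+n+1)\times(m+n+1)$ payoff matrix $$\begin{pmatrix}\mathbf 0 & A & -b\\ -A^\intercal & \mathbf 0 & c\\ b^\intercal & -c^\intercal & 0\end{pmatrix},$$ and let $(p^*,q^*,t^* )$ (with $p^*\in\mathbb R^m$, $q^*\in\mathbb R^n$, $t^*\in\mathbb R$) be a maximin strategy of the row player. Then: 1. If $t^*>0$, then $\left(\frac1{t^*}q^*,\frac1{t^*}p^*\right)$ is an optimal primal-dual pair for $(P,D)$. 2. If $t^*=0$, then $q^*$ is an unboundedness certificate for $(P)$.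
   Context: Inequalities are componentwise. In a zero-sum game with payoff matrix $N$, mixed strategies are probability vectors, the row player receives $p^\intercal Nq$, and a maximin strategy of the row player is a $p^*\in\arg\max_p\min_q p^\intercal Nq$. An optimal primal-dual pair is a primal feasible $x$ and dual feasible $y$ with $c^\intercal x=b^\intercal y$; an unboundedness certificate for $(P)$ is $w$ with $Aw\le\mathbf 0$, $w\ge\mathbf 0$, $c^\intercal w>0$. *)

From HB Require Import structures.
From mathcomp Require Import all_boot all_order all_algebra.
From mathcomp Require Import boolp classical_sets reals.
Set Implicit Arguments. Unset Strict Implicit. Unset Printing Implicit Defensive.
Import Order.TTheory GRing.Theory Num.Theory.
Local Open Scope ring_scope.
Local Open Scope classical_set_scope.

Definition mle (R : realType) (k l : nat) (u v : 'M[R]_(k, l)) : Prop :=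
  forall i j, u i j <= v i j.
Definition mlt (R : realType) (k l : nat) (u v : 'M[R]_(k, l)) : Prop :=
  forall i j, u i j < v i j.

Definition probvec (R : realType) (k : nat) (p : 'cV[R]_k) : Prop :=
  mle 0 p /\ \sum_(i < k) p i 0 = 1.

Definition payoff (R : realType) (k : nat) (N : 'M[R]_k) (p q : 'cV[R]_k) : R :=
  (p^T *m N *m q) 0 0.

Definition guaranteed (R : realType) (k : nat) (N : 'M[R]_k) (p : 'cV[R]_k) : R :=
  inf [set payoff N p q | q in [set q : 'cV[R]_k | probvec q]].

Definition maximin (R : realType) (k : nat) (N : 'M[R]_k) (ps : 'cV[R]_k) : Prop :=
  probvec ps /\ forall p, probvec p -> guaranteed N p <= guaranteed N ps.

Definition lp_game (R : realType) (m n : nat) (A : 'M[R]_(m, n))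
  (b : 'cV[R]_m) (c : 'cV[R]_n) : 'M[R]_(m + n + 1) :=
  block_mx (block_mx (0 : 'M_(m, m)) A (- A^T) (0 : 'M_(n, n)))
           (col_mx (- b) c)
           (row_mx b^T (- c^T))
           (0 : 'M_1).

Definition primal_feasible (R : realType) (m n : nat) (A : 'M[R]_(m, n))
  (b : 'cV[R]_m) (x : 'cV[R]_n) : Prop := mle (A *m x) b /\ mle 0 x.
Definition dual_feasible (R : realType) (m n : nat) (A : 'M[R]_(m, n))
  (c : 'cV[R]_n) (y : 'cV[R]_m) : Prop := mle c (A^T *m y) /\ mle 0 y.
Definition optimal_pair (R : realType) (m n : nat) (A : 'M[R]_(m, n))
  (b : 'cV[R]_m) (c : 'cV[R]_n) (x : 'cV[R]_n) (y : 'cV[R]_m) : Prop :=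
  [/\ primal_feasible A b x, dual_feasible A c y & c^T *m x = b^T *m y].
Definition unbounded_cert (R : realType) (m n : nat) (A : 'M[R]_(m, n))
  (c : 'cV[R]_n) (w : 'cV[R]_n) : Prop :=
  [/\ mle (A *m w) 0, mle 0 w & 0 < (c^T *m w) 0 0].

From mathcomp Require Import all_boot all_order all_algebra.
From mathcomp Require Import reals lra.
Set Implicit Arguments. Unset Strict Implicit. Unset Printing Implicit Defensive.
Import Order.TTheory GRing.Theory Num.Theory.
Local Open Scope ring_scope.

(* Farkas' lemma, proved by induction on the number of generators (when the
   first generator [f0] is not separated by the vector [x] separating the
   others, project everything along [x] onto the kernel of [f0]), shows that a
   skew-symmetric game N has a strategy s with N s <= 0: in the alternative, a
   vector v >= 0 with N v < 0 would have v^T N v = \sum_j v_j (N v)_j = 0 with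
   every term <= 0, forcing v = 0.  Such an s guarantees payoff 0, hence so does
   every maximin strategy, and for a skew-symmetric N this guarantee reads
   N s <= 0.  For the LP game and s = (p, q, t) these inequalities say
   A q <= t b, A^T p >= t c and b^T p <= c^T q.  If t > 0, (q/t, p/t) is
   feasible and weak duality turns b^T p <= c^T q into an equality; if t = 0
   and c^T q <= 0, positivity of b and c forces p = q = 0, contradicting that
   s is a probability vector. *)

Section Farkas.
Variables (R : realFieldType) (d : nat).
Implicit Types (a b : 'rV[R]_d) (x : 'cV[R]_d).

Definition pairing a x : R := (a *m x) 0 0.

Definition in_cone k (f : 'I_k -> 'rV[R]_d) b :=
  exists2 y : 'I_k -> R, (forall i, 0 <= y i) & b = \sum_i y i *: f i.

Definition separated k (f : 'I_k -> 'rV[R]_d) b :=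
  exists2 x, (forall i, pairing (f i) x <= 0) & 0 < pairing b x.

Lemma pairing_mulmx a (M : 'M[R]_d) x : pairing a (M *m x) = pairing (a *m M) x.
Proof. by rewrite /pairing mulmxA. Qed.

Lemma pairingB a a' x : pairing (a - a') x = pairing a x - pairing a' x.
Proof. by rewrite /pairing mulmxBl !mxE. Qed.

Lemma pairing_suml k (y : 'I_k -> R) (f : 'I_k -> 'rV[R]_d) x :
  pairing (\sum_i y i *: f i) x = \sum_i y i * pairing (f i) x.
Proof.
by rewrite /pairing mulmx_suml summxE; apply: eq_bigr => i _; rewrite -scalemxAl mxE.
Qed.

Lemma pairing_trmx_gt0 a : a != 0 -> 0 < pairing a a^T.
Proof.
move=> a_neq0; have [j aj_neq0] : exists j, a 0 j != 0.
  apply/existsP; apply: contraNT a_neq0 => /existsPn a0.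
  by apply/eqP/rowP => j; rewrite mxE; apply/eqP/negbNE/a0.
have sq_ge0 i : 0 <= a 0 i * a^T i 0 by rewrite mxE -expr2 sqr_ge0.
rewrite /pairing mxE lt_def psumr_neq0 ?sumr_ge0 ?andbT //.
apply/hasP; exists j; first exact: mem_index_enum.
by rewrite mxE -expr2 exprn_even_gt0.
Qed.

Lemma farkas_nil (f : 'I_0 -> 'rV[R]_d) b : in_cone f b \/ separated f b.
Proof.
have [->|b_neq0] := eqVneq b 0.
  by left; exists (fun=> 0) => //; rewrite big_ord0.
by right; exists b^T => [[]|]; last exact: pairing_trmx_gt0.
Qed.

Lemma in_cone_cons k (f : 'I_k.+1 -> 'rV[R]_d) b mu : 0 <= mu ->
  in_cone (fun i => f (lift ord0 i)) (b - mu *: f ord0) -> in_cone f b.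
Proof.
move=> mu_ge0 [y y_ge0 hb].
exists (fun i => if unlift ord0 i is Some j then y j else mu).
  by move=> i; case: (unlift ord0 i).
rewrite big_ord_recl unlift_none -[LHS](subrK (mu *: f ord0)) hb addrC.
by congr (_ + _); apply: eq_bigr => i _; rewrite liftK.
Qed.

Definition proj_along x (f0 : 'rV[R]_d) : 'M[R]_d :=
  1%:M - (pairing f0 x)^-1 *: (x *m f0).

Lemma mulmx_proj_along a x f0 :
  a *m proj_along x f0 = a - (pairing a x / pairing f0 x) *: f0.
Proof.
by rewrite mulmxBr mulmx1 -scalemxAr mulmxA [a *m x]mx11_scalar mul_scalar_mx scalerA mulrC.
Qed.

Lemma proj_along_annihilates x f0 : pairing f0 x != 0 -> f0 *m proj_along x f0 = 0.
Proof. by move=> f0x_neq0; rewrite mulmx_proj_along divff // scale1r subrr. Qed.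

Section Step.
Variables (k : nat) (f : 'I_k.+1 -> 'rV[R]_d) (b : 'rV[R]_d) (x : 'cV[R]_d).
Let fs i := f (lift ord0 i).
Let P := proj_along x (f ord0).
Hypothesis f0x_gt0 : 0 < pairing (f ord0) x.

Lemma in_cone_of_proj : (forall i, pairing (fs i) x <= 0) -> 0 < pairing b x ->
  in_cone (fun i => fs i *m P) (b *m P) -> in_cone f b.
Proof.
move=> fsx_le0 bx_gt0 [y y_ge0 hbP].
set v := b - \sum_i y i *: fs i.
have vP0 : v *m P = 0.
  rewrite mulmxBl mulmx_suml hbP; apply/eqP; rewrite subr_eq0.
  by apply/eqP/eq_bigr => i _; rewrite scalemxAl.
have v_ge0 : 0 <= pairing v x.
  rewrite pairingB pairing_suml subr_ge0 (le_trans _ (ltW bx_gt0)) //.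
  by rewrite sumr_le0 // => i _; rewrite mulr_ge0_le0.
apply: (@in_cone_cons _ _ _ (pairing v x / pairing (f ord0) x)).
  by rewrite divr_ge0 // ltW.
move/eqP: vP0; rewrite mulmx_proj_along subr_eq0 => /eqP <-.
by exists y; rewrite // /v opprB addrC subrK.
Qed.

Lemma separated_of_proj :
  separated (fun i => fs i *m P) (b *m P) -> separated f b.
Proof.
move=> [x' fsPx'_le0 bPx'_gt0]; exists (P *m x'); rewrite ?pairing_mulmx //.
move=> i; case: (unliftP ord0 i) => [j ->|->]; rewrite pairing_mulmx.
  exact: fsPx'_le0.
by rewrite proj_along_annihilates ?gt_eqF // /pairing mul0mx mxE.
Qed.

End Step.

Theorem farkas k (f : 'I_k -> 'rV[R]_d) b : in_cone f b \/ separated f b.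
Proof.
elim: k f b => [|k IHk] f b; first exact: farkas_nil.
have [cone_b|[x fsx_le0 bx_gt0]] := IHk (fun i => f (lift ord0 i)) b.
  by left; apply: (@in_cone_cons _ _ _ 0); rewrite // scale0r subr0.
have [f0x_le0|f0x_gt0] := leP (pairing (f ord0) x) 0.
  by right; exists x => // i; case: (unliftP ord0 i) => [j ->|->].
have [cone_bP|sep_bP] := IHk (fun i => f (lift ord0 i) *m proj_along x (f ord0))
                             (b *m proj_along x (f ord0)).
  by left; apply: in_cone_of_proj cone_bP.
by right; apply: separated_of_proj sep_bP.
Qed.

Corollary farkas_mx k (F : 'M[R]_(k, d)) b :
  (exists2 y : 'rV[R]_k, (forall i, 0 <= y 0 i) & b = y *m F) \/
  (exists2 x, (forall i, (F *m x) i 0 <= 0) & 0 < pairing b x).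
Proof.
have [[y y_ge0 ->]|[x Fx_le0 bx_gt0]] := farkas (fun i => row i F) b.
  left; exists (\row_i y i) => [i|]; first by rewrite mxE.
  by rewrite mulmx_sum_row; apply: eq_bigr => i _; rewrite mxE.
by right; exists x => // i; move: (Fx_le0 i); rewrite /pairing -row_mul mxE.
Qed.

End Farkas.

Section ComponentwiseOrder.
Variable R : realType.

Lemma mle_col_mx m1 m2 n (u u' : 'M[R]_(m1, n)) (v v' : 'M[R]_(m2, n)) :
  mle (col_mx u v) (col_mx u' v') <-> mle u u' /\ mle v v'.
Proof.
split=> [uv_le|[u_le v_le] i j].
  by split=> i j; [move: (uv_le (lshift m2 i) j) | move: (uv_le (rshift m1 i) j)];
    rewrite !(col_mxEu, col_mxEd).
by rewrite !mxE; case: (split i) => i'; [exact: u_le | exact: v_le].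
Qed.

Lemma mle_subr0 m n (u v : 'M[R]_(m, n)) : mle (u - v) 0 <-> mle u v.
Proof. by split=> uv_le i j; move: (uv_le i j); rewrite !mxE subr_le0. Qed.

Lemma mle_pscale2l m n (t : R) (u v : 'M[R]_(m, n)) :
  0 < t -> mle (t *: u) (t *: v) <-> mle u v.
Proof. by move=> t_gt0; split=> uv_le i j; move: (uv_le i j); rewrite !mxE ler_pM2l. Qed.

Lemma dotC k (u v : 'cV[R]_k) : (u^T *m v) 0 0 = (v^T *m u) 0 0.
Proof. by rewrite !mxE; apply: eq_bigr => i _; rewrite !mxE mulrC. Qed.

Lemma mle_dot k (u v w : 'cV[R]_k) :
  mle u v -> mle 0 w -> (u^T *m w) 0 0 <= (v^T *m w) 0 0.
Proof.
move=> uv_le w_ge0; rewrite !mxE; apply: ler_sum => i _; rewrite !mxE.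
by apply: ler_wpM2r; [move: (w_ge0 i 0); rewrite mxE | exact: uv_le].
Qed.

Lemma dot_pos_le0 k (c w : 'cV[R]_k) :
  mlt 0 c -> mle 0 w -> (c^T *m w) 0 0 <= 0 -> w = 0.
Proof.
move=> c_gt0 w_ge0 cw_le0; have ge0 i : 0 <= c i 0 * w i 0.
  by apply: mulr_ge0; [move: (c_gt0 i 0) | move: (w_ge0 i 0)]; rewrite mxE // => /ltW.
have cw0 : \sum_i c i 0 * w i 0 = 0.
  apply/le_anti; rewrite sumr_ge0 // andbT; apply: le_trans cw_le0.
  by rewrite mxE le_eqVlt; apply/orP; left; apply/eqP/eq_bigr => i _; rewrite mxE.
apply/matrixP => i j; rewrite (ord1 j) mxE.
move/eqP: (psumr_eq0P (fun i _ => ge0 i) cw0 (i := i) isT).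
by rewrite mulf_eq0 gt_eqF ?orFb => [/eqP//|]; move: (c_gt0 i 0); rewrite mxE.
Qed.

Lemma probvec_neq0 k (s : 'cV[R]_k) : probvec s -> s != 0.
Proof.
move=> [_ sum_s]; apply: contra_eq_neq sum_s => ->.
by rewrite big1 1?eq_sym ?oner_neq0 // => i _; rewrite mxE.
Qed.

End ComponentwiseOrder.

Section MatrixGames.
Variables (R : realType) (K : nat) (N : 'M[R]_K).

Lemma payoffE p q : payoff N p q = \sum_j (p^T *m N) 0 j * q j 0.
Proof. by rewrite /payoff mxE. Qed.

Lemma payoff_delta p i : payoff N p (delta_mx i 0) = (p^T *m N) 0 i.
Proof. by rewrite /payoff -colE mxE. Qed.

Lemma probvec_delta i : probvec (delta_mx i 0 : 'cV[R]_K).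
Proof.
split=> [j j'|]; first by rewrite !mxE; case: (_ && _).
rewrite (bigD1 i) //= mxE !eqxx big1 ?addr0 // => j ji.
by rewrite mxE (negbTE ji).
Qed.

Lemma guaranteed_le_payoff p q : probvec q -> guaranteed N p <= payoff N p q.
Proof.
move=> q_prob; apply: ge_inf; last by exists q.
exists (- \sum_j `|(p^T *m N) 0 j|) => _ [q' [q'_ge0 q'_sum] <-].
rewrite payoffE -[X in X <= _]mulr1 -q'_sum mulr_sumr; apply: ler_sum => j _.
apply: ler_wpM2r; first by move: (q'_ge0 j 0); rewrite mxE.
rewrite lerNl (bigD1 j) //= -[X in X <= _]addr0 lerD ?ler_normr ?lexx ?orbT //.
exact: sumr_ge0.
Qed.

End MatrixGames.

Section SkewSymmetricGames.
Variables (R : realType) (K : nat) (N : 'M[R]_K).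
Hypotheses (N_skew : N^T = - N) (K_gt0 : (0 < K)%N).

Lemma skew_trmx_mulmx (p : 'cV[R]_K) : p^T *m N = - (N *m p)^T.
Proof. by rewrite trmx_mul N_skew mulmxN opprK. Qed.

Lemma skew_quad_form0 (v : 'cV[R]_K) : (v^T *m (N *m v)) 0 0 = 0.
Proof.
have : (v^T *m (N *m v)) 0 0 = - (v^T *m (N *m v)) 0 0.
  by rewrite {1}mulmxA skew_trmx_mulmx mulNmx mxE dotC.
by move=> q_opp; lra.
Qed.

Lemma skew_mulmx_not_lt0 (v : 'cV[R]_K) : mle 0 v -> ~ mlt (N *m v) 0.
Proof.
move=> v_ge0 Nv_lt0.
have v0 : v = 0.
  apply: (@dot_pos_le0 _ _ (- (N *m v))) v_ge0 _.
    by move=> i j; move: (Nv_lt0 i j); rewrite !mxE oppr_gt0.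
  by rewrite linearN /= mulNmx mxE dotC skew_quad_form0 oppr0.
by move: (Nv_lt0 (Ordinal K_gt0) 0); rewrite v0 mulmx0 mxE ltxx.
Qed.

Lemma skew_exists_probvec_mulmx_le0 : exists2 s, probvec s & mle (N *m s) 0.
Proof.
(* If [row_mx 0 1 = y *m F] with y >= 0, then s := (lsubmx y)^T works; a
   separating vector [col_mx u t] would instead give N (- u) <= - t < 0 with
   - u >= 0. *)
pose F : 'M[R]_(K + K, K + 1) := col_mx (row_mx N^T (const_mx 1)) (row_mx 1%:M 0).
have [[y y_ge0 hy]|[x Fx_le0 bx_gt0]] := farkas_mx F (row_mx 0 (const_mx 1)).
  rewrite -[y]hsubmxK mul_row_col !mul_mx_row mulmx1 mulmx0 add_row_mx addr0 in hy.
  have [/eqP lyN lyS] := eq_row_mx hy; rewrite eq_sym addr_eq0 in lyN.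
  exists (lsubmx y)^T; first split=> [i j|].
  - by rewrite (ord1 j) !mxE; move: (y_ge0 (lshift K i)).
  - move/matrixP: lyS => /(_ 0 0); rewrite !mxE => sum1; apply/esym/(etrans sum1).
    by apply: eq_bigr => i _; rewrite !mxE mulr1.
  rewrite -[N]trmxK -trmx_mul (eqP lyN) => i j.
  by rewrite (ord1 j) !mxE oppr_le0; move: (y_ge0 (rshift K i)).
exfalso; move: Fx_le0 bx_gt0; rewrite -[x]vsubmxK.
set u := usubmx x; set t := dsubmx x.
rewrite /F /pairing mul_col_mx !mul_row_col mul1mx !mul0mx addr0 add0r => Fx_le0 t_gt0.
have const_t k i : ((const_mx 1 : 'M[R]_(k, 1)) *m t) i 0 = t 0 0.
  by rewrite mxE big_ord1 !mxE mul1r.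
apply: (@skew_mulmx_not_lt0 (- u)).
  move=> i j; move: (Fx_le0 (rshift K i)).
  by rewrite col_mxEd (ord1 j) !mxE oppr_ge0.
rewrite mulmxN -mulNmx -N_skew => i j; rewrite (ord1 j) [X in _ < X]mxE.
move: (Fx_le0 (lshift K i)) t_gt0; rewrite col_mxEu [X in X <= 0]mxE !const_t; lra.
Qed.

Lemma skew_payoff_ge0 s q : mle (N *m s) 0 -> probvec q -> 0 <= payoff N s q.
Proof.
move=> Ns_le0 [q_ge0 _]; rewrite /payoff skew_trmx_mulmx mulNmx mxE oppr_ge0.
by have := mle_dot Ns_le0 q_ge0; rewrite trmx0 mul0mx [(0 : 'M_1) 0 0]mxE.
Qed.

Theorem maximin_skew ps : maximin N ps -> mle (N *m ps) 0.
Proof.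
move=> [_ ps_max]; have [s s_prob Ns_le0] := skew_exists_probvec_mulmx_le0.
have s_safe : 0 <= guaranteed N s.
  by apply: lb_le_inf => [|_ [q q_prob <-]]; [exists (payoff N s s), s | exact: skew_payoff_ge0].
move=> i j; rewrite (ord1 j) mxE.
have := le_trans (ps_max s s_prob) (guaranteed_le_payoff N ps (probvec_delta _ i)).
by move/(le_trans s_safe); rewrite payoff_delta skew_trmx_mulmx !mxE oppr_ge0.
Qed.

End SkewSymmetricGames.

Section LinearProgramGame.
Variables (R : realType) (m n : nat) (A : 'M[R]_(m, n)) (b : 'cV[R]_m) (c : 'cV[R]_n).

Lemma lp_game_skew : (lp_game A b c)^T = - lp_game A b c.
Proof.
rewrite /lp_game !tr_block_mx !tr_col_mx !tr_row_mx !opp_block_mx.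
by rewrite !trmx0 !oppr0 !trmxK opp_col_mx opp_row_mx !opprK !linearN /= !trmxK.
Qed.

Lemma lp_game_mulmx p q t :
  lp_game A b c *m col_mx (col_mx p q) t%:M =
  col_mx (col_mx (A *m q - t *: b) (t *: c - A^T *m p)) (b^T *m p - c^T *m q).
Proof.
rewrite /lp_game !mul_block_col !mul_row_col !mul0mx !add0r !addr0 !mul_mx_scalar.
by rewrite !scale_col_mx add_col_mx !mulNmx scalerN [- _ + _]addrC.
Qed.

Lemma lp_game_maximin_ineqs p q t :
  maximin (lp_game A b c) (col_mx (col_mx p q) t%:M) ->
  [/\ mle (A *m q) (t *: b), mle (t *: c) (A^T *m p)
    & (b^T *m p) 0 0 <= (c^T *m q) 0 0].
Proof.
have size_gt0 : (0 < m + n + 1)%N by rewrite addn1.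
move=> /(maximin_skew lp_game_skew size_gt0).
rewrite lp_game_mulmx -[0 : 'cV_(m + n + 1)]col_mx0 -[0 : 'cV_(m + n)]col_mx0.
by move=> /mle_col_mx[/mle_col_mx[/mle_subr0 ? /mle_subr0 ?] /mle_subr0 /(_ 0 0)].
Qed.

Lemma weak_duality x y : primal_feasible A b x -> dual_feasible A c y ->
  (c^T *m x) 0 0 <= (b^T *m y) 0 0.
Proof.
move=> [Ax_le x_ge0] [c_le y_ge0]; apply: le_trans (mle_dot c_le x_ge0) _.
by rewrite trmx_mul trmxK -mulmxA [X in X <= _]dotC; exact: mle_dot Ax_le y_ge0.
Qed.

Lemma lp_game_optimal_pair p q t : mle 0 p -> mle 0 q -> 0 < t ->
  mle (A *m q) (t *: b) -> mle (t *: c) (A^T *m p) ->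
  (b^T *m p) 0 0 <= (c^T *m q) 0 0 ->
  optimal_pair A b c (t^-1 *: q) (t^-1 *: p).
Proof.
move=> p_ge0 q_ge0 t_gt0 Aq_le tc_le bp_le_cq.
have scaleK k (w : 'cV[R]_k) : t *: (t^-1 *: w) = w.
  by rewrite scalerA mulfV ?gt_eqF // scale1r.
have scale_ge0 k (w : 'cV[R]_k) : mle 0 w -> mle 0 (t^-1 *: w).
  by move=> w_ge0; apply/(mle_pscale2l _ _ t_gt0); rewrite scaleK scaler0.
have x_feas : primal_feasible A b (t^-1 *: q).
  split; last exact: scale_ge0.
  by apply/(mle_pscale2l _ _ t_gt0); rewrite -scalemxAr scaleK.
have y_feas : dual_feasible A c (t^-1 *: p).
  split; last exact: scale_ge0.
  by apply/(mle_pscale2l _ _ t_gt0); rewrite -scalemxAr scaleK.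
split=> //; apply/matrixP => i j; rewrite !ord1; apply/le_anti.
by rewrite weak_duality //= -!scalemxAr 2![((_ : R) *: _ : 'M_1) 0 0]mxE ler_wpM2l // invr_ge0 ltW.
Qed.

Lemma lp_game_unbounded_cert p q : mlt 0 b -> mlt 0 c -> mle 0 p -> mle 0 q ->
  col_mx p q != 0 -> mle (A *m q) 0 -> (b^T *m p) 0 0 <= (c^T *m q) 0 0 ->
  unbounded_cert A c q.
Proof.
move=> b_gt0 c_gt0 p_ge0 q_ge0 pq_neq0 Aq_le0 bp_le_cq; split=> //.
rewrite ltNge; apply/negP => cq_le0.
have q0 := dot_pos_le0 c_gt0 q_ge0 cq_le0.
have p0 := dot_pos_le0 b_gt0 p_ge0 (le_trans bp_le_cq cq_le0).
by move: pq_neq0; rewrite p0 q0 col_mx0 eqxx.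
Qed.

End LinearProgramGame.

Theorem proposition4 (R : realType) (m n : nat) (A : 'M[R]_(m, n))
  (b : 'cV[R]_m) (c : 'cV[R]_n) (ps : 'cV[R]_m) (qs : 'cV[R]_n) (ts : R) :
  mlt 0 b -> mlt 0 c ->
  maximin (lp_game A b c) (col_mx (col_mx ps qs) (ts%:M : 'cV[R]_1)) ->
  (0 < ts -> optimal_pair A b c (ts^-1 *: qs) (ts^-1 *: ps)) /\
  (ts = 0 -> unbounded_cert A c qs).
Proof.
move=> b_gt0 c_gt0 s_maximin; have [[s_ge0 _] _] := s_maximin.
have [p_ge0 q_ge0] : mle 0 ps /\ mle 0 qs.
  move: s_ge0; rewrite -[0 : 'cV_(m + n + 1)]col_mx0 -[0 : 'cV_(m + n)]col_mx0.
  by case/mle_col_mx => /mle_col_mx.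
have [Aq_le tc_le bp_le_cq] := lp_game_maximin_ineqs s_maximin.
split=> [t_gt0 | t0]; first exact: lp_game_optimal_pair.
apply: lp_game_unbounded_cert bp_le_cq => //; last by rewrite -(scale0r b) -t0.
apply: contra_neq (probvec_neq0 (proj1 s_maximin)) => ->.
by rewrite t0 raddf0 col_mx0.
Qed.
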